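(* Let $\phi_1,\dots,\phi_B\in\mathbb R^d$ with $\|\phi_i\|_2\le1$, and let $\eta>0$ with $\eta B<\frac13$. Let $H:=(I-\eta\phi_1\phi_1^\top)(I-\eta\phi_2\phi_2^\top)\cdots(I-\eta\phi_B\phi_B^\top)$. Then, in the positive semidefinite order, $$I-2\eta\Big(1+\frac{\eta B}{1-2\eta B}\Big)\sum_{i=1}^B\phi_i\phi_i^\top\;\preceq\;H^\top H\;\preceq\;I-2\eta\Big(1-\frac{\eta B}{1-2\eta B}\Big)\sum_{i=1}^B\phi_i\phi_i^\top .$$ *)

From mathcomp Require Import all_boot all_order all_algebra.
Set Implicit Arguments. Unset Strict Implicit. Unset Printing Implicit Defensive.
Import Order.TTheory GRing.Theory Num.Theory.
Local Open Scope ring_scope.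

Definition psd (R : realFieldType) (d : nat) (A : 'M[R]_d) : Prop :=
  forall x : 'cV[R]_d, 0 <= (x^T *m A *m x) 0 0.

Definition loewner_le (R : realFieldType) (d : nat) (A B : 'M[R]_d) : Prop :=
  psd (B - A).

Definition sqnorm (R : realFieldType) (d : nat) (v : 'cV[R]_d) : R :=
  \sum_(j < d) v j 0 ^+ 2.

Definition Hprod (R : realFieldType) (d B : nat) (eta : R) (phi : 'I_B -> 'cV[R]_d)
  : 'M[R]_d :=
  \big[mulmx/1%:M]_(i < B) (1%:M - eta *: (phi i *m (phi i)^T)).

Definition Ssum (R : realFieldType) (d B : nat) (phi : 'I_B -> 'cV[R]_d) : 'M[R]_d :=
  \sum_(i < B) phi i *m (phi i)^T.

From mathcomp Require Import all_boot all_order all_algebra.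
From mathcomp Require Import ring lra.
Import Order.TTheory GRing.Theory Num.Theory.
Set Implicit Arguments. Unset Strict Implicit. Unset Printing Implicit Defensive.
Local Open Scope ring_scope.

(* Fix x and apply the factors of H to it from the right: y_B = x and
   y_(i-1) = y_i - eta <phi_i, y_i> phi_i, so that H x = y_0.  Each step lowers
   |y|^2 by (2 eta - eta^2 |phi_i|^2) b_i^2 with b_i = <phi_i, y_i>, hence
   |x|^2 - |H x|^2 lies between (2 eta - eta^2) sum b_i^2 and 2 eta sum b_i^2.
   The quadratic form of sum phi_i phi_i^T evaluates <phi_i, x> instead of b_i,
   but y_i has drifted from x by at most eta sum_(j > i) |b_j|; together with
   Cauchy-Schwarz (sum |b_j|)^2 <= B sum b_j^2 this pins sum <phi_i, x>^2
   between (1 - eta B) sum b_i^2 and (1 + (B - 1) eta + (eta B)^2) sum b_i^2,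
   and the factor 1 +- eta B / (1 - 2 eta B) absorbs both distortions. *)

Section ScalarEstimates.
Variable R : realFieldType.
Implicit Types (a b r p : R) (l : seq R).

Lemma sqr_perturb a b r : `|a - b| <= r ->
  b ^+ 2 - 2 * `|b| * r <= a ^+ 2 <= b ^+ 2 + 2 * `|b| * r + r ^+ 2.
Proof.
move=> hab; have r0 : 0 <= r := le_trans (normr_ge0 _) hab.
have -> : a ^+ 2 = b ^+ 2 + 2 * (b * (a - b)) + (a - b) ^+ 2 by ring.
have cross : `|b * (a - b)| <= `|b| * r by rewrite normrM ler_wpM2l.
have err : (a - b) ^+ 2 <= r ^+ 2.
  by rewrite -real_normK ?num_real // lerXn2r ?nnegrE.
have := ler_norm (b * (a - b)); have := ler_norm (- (b * (a - b))).
rewrite normrN; have := sqr_ge0 (a - b); lra.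
Qed.

Lemma mul_sum_le p l :
  2 * p * \sum_(b <- l) b <= (size l)%:R * p ^+ 2 + \sum_(b <- l) b ^+ 2.
Proof.
elim: l => [|b l IH]; first by rewrite !big_nil !mulr0 mul0r addr0.
rewrite !big_cons /= -natr1; have := sqr_ge0 (p - b); nra.
Qed.

Lemma sqr_sum_le l : (\sum_(b <- l) b) ^+ 2 <= (size l)%:R * \sum_(b <- l) b ^+ 2.
Proof.
elim: l => [|b l IH]; first by rewrite !big_nil expr0n mulr0.
rewrite !big_cons /= -natr1; have := mul_sum_le b l; nra.
Qed.

Lemma sqr_sum_norm_le l :
  (\sum_(b <- l) `|b|) ^+ 2 <= (size l)%:R * \sum_(b <- l) b ^+ 2.
Proof.
have := sqr_sum_le (map Num.norm l); rewrite size_map !big_map.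
suff -> : \sum_(b <- l) `|b| ^+ 2 = \sum_(b <- l) b ^+ 2 by [].
by apply: eq_bigr => b _; rewrite real_normK ?num_real.
Qed.

End ScalarEstimates.

Section Slack.
Variable R : realFieldType.
Implicit Types eta n : R.

Definition slack eta n := eta * n / (1 - 2 * eta * n).

Lemma slackE eta n : eta * n < 1 / 3 -> slack eta n * (1 - 2 * eta * n) = eta * n.
Proof. by move=> h; rewrite mulfVK //; apply/eqP; nra. Qed.

Lemma slack_ge0 eta n : 0 <= eta -> 0 <= n -> eta * n < 1 / 3 -> 0 <= slack eta n.
Proof. by move=> he hn h; rewrite divr_ge0 ?mulr_ge0 //; nra. Qed.

Lemma slack_le1 eta n : 0 <= eta -> 0 <= n -> eta * n < 1 / 3 -> slack eta n <= 1.
Proof. by move=> he hn h; rewrite ler_pdivrMr ?mul1r; nra. Qed.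

Lemma slack_lower eta n : 0 <= eta -> 0 <= n -> eta * n < 1 / 3 ->
  1 <= (1 + slack eta n) * (1 - eta * n).
Proof.
move=> he hn h; have := slackE h; have := slack_ge0 he hn h.
have := mulr_ge0 he hn; nra.
Qed.

Lemma slack_upper eta n : 0 < eta -> 0 <= n -> 0 <= n * (n - 1) -> eta * n < 1 / 3 ->
  (1 - slack eta n) * (1 + (n - 1) * eta + (eta * n) ^+ 2) <= 1 - eta / 2.
Proof.
move=> he hn hnn h.
have D_gt0 : 0 < 1 - 2 * eta * n by nra.
rewrite -(ler_pM2r D_gt0) mulrAC mulrBl mul1r slackE //.
have := mulr_ge0 (mulr_ge0 (ltW he) (ltW he)) hnn.
have := exprn_ge0 3 (mulr_ge0 (ltW he) hn).
nra.
Qed.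

Lemma slack_bounds eta n S T A W : 0 < eta -> 0 <= n -> 0 <= n * (n - 1) ->
  eta * n < 1 / 3 -> 0 <= S -> T ^+ 2 <= n * S ->
  (2 * eta - eta ^+ 2) * S <= W <= 2 * eta * S ->
  S - eta * (T ^+ 2 - S) <= A <= S + eta * (T ^+ 2 - S) + eta ^+ 2 * n * T ^+ 2 ->
  2 * eta * (1 - slack eta n) * A <= W <= 2 * eta * (1 + slack eta n) * A.
Proof.
move=> eta_gt0 n_ge0 nn small S0 CS /andP[Wlo Whi] /andP[Alo Ahi].
have eta_ge0 := ltW eta_gt0.
have ηCS : eta * T ^+ 2 <= eta * (n * S) := ler_wpM2l eta_ge0 CS.
have ηηCS : eta ^+ 2 * n * T ^+ 2 <= eta ^+ 2 * n * (n * S).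
  by rewrite ler_wpM2l // mulr_ge0 // sqr_ge0.
have ηS0 : 0 <= eta * S := mulr_ge0 eta_ge0 S0.
have η2_ge0 : 0 <= 2 * eta by rewrite mulr_ge0.
apply/andP; split.
- have A_ub : A <= (1 + (n - 1) * eta + (eta * n) ^+ 2) * S by nra.
  have c1 : 0 <= 1 - slack eta n by rewrite subr_ge0 slack_le1.
  apply: le_trans Wlo; rewrite -mulrA.
  have := ler_wpM2l (mulr_ge0 η2_ge0 c1) A_ub.
  have := ler_wpM2r S0 (slack_upper eta_gt0 n_ge0 nn small).
  nra.
- have A_lb : (1 - eta * n) * S <= A by nra.
  have c0 : 0 <= 1 + slack eta n by rewrite addr_ge0 // slack_ge0.
  apply: le_trans Whi _; rewrite -mulrA.
  have := ler_wpM2l (mulr_ge0 η2_ge0 c0) A_lb.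
  have := ler_wpM2r ηS0 (slack_lower eta_ge0 n_ge0 small).
  nra.
Qed.

End Slack.

Section Dot.
Variables (R : realFieldType) (d : nat).
Implicit Types u v w : 'cV[R]_d.

Definition dot u v : R := \sum_(j < d) u j 0 * v j 0.

Lemma dotC u v : dot u v = dot v u.
Proof. by apply: eq_bigr => j _; rewrite mulrC. Qed.

Lemma dotBZr u v w k : dot u (v - k *: w) = dot u v - k * dot u w.
Proof. by rewrite /dot mulr_sumr -sumrB; apply: eq_bigr => j _; rewrite !mxE; ring. Qed.

Lemma dotBZl u v w k : dot (v - k *: w) u = dot v u - k * dot w u.
Proof. by rewrite dotC dotBZr (dotC u v) (dotC u w). Qed.

Lemma dot_ge0 u : 0 <= dot u u.
Proof. by apply: sumr_ge0 => j _; rewrite -expr2 sqr_ge0. Qed.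

Lemma sqnorm_dot u : sqnorm u = dot u u.
Proof. by apply: eq_bigr => j _; rewrite expr2. Qed.

Lemma dot_mx u v : (u^T *m v) 0 0 = dot u v.
Proof. by rewrite mxE; apply: eq_bigr => j _; rewrite mxE. Qed.

Lemma norm_dot_le1 u v : dot u u <= 1 -> dot v v <= 1 -> `|dot u v| <= 1.
Proof.
(* 0 <= |u +- v|^2 gives 2 |<u, v>| <= |u|^2 + |v|^2. *)
have sqr_sum_ge0 (f : 'I_d -> R) : 0 <= \sum_j f j ^+ 2.
  by apply: sumr_ge0 => j _; exact: sqr_ge0.
have := sqr_sum_ge0 (fun j => u j 0 - v j 0).
have := sqr_sum_ge0 (fun j => u j 0 + v j 0).
have -> : \sum_j (u j 0 + v j 0) ^+ 2 = dot u u + dot v v + 2 * dot u v.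
  by rewrite /dot mulr_sumr -!big_split; apply: eq_bigr => j _ /=; ring.
have -> : \sum_j (u j 0 - v j 0) ^+ 2 = dot u u + dot v v - 2 * dot u v.
  by rewrite /dot mulr_sumr -big_split -sumrB; apply: eq_bigr => j _ /=; ring.
by case: (ler0P (dot u v)); lra.
Qed.

Lemma reflector_mulmx eta v w :
  (1%:M - eta *: (v *m v^T)) *m w = w - (eta * dot v w) *: v.
Proof.
rewrite mulmxBl mul1mx -scalemxAl -mulmxA -scalerA; congr (_ - _ *: _).
by apply/matrixP => i j; rewrite !mxE big_ord1 (ord1 j) dot_mx mulrC.
Qed.

Lemma dot_reflector eta v w :
  let w' := w - (eta * dot v w) *: v in
  dot w' w' = dot w w - (2 * eta - eta ^+ 2 * dot v v) * dot v w ^+ 2.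
Proof. by rewrite /= dotBZl !dotBZr (dotC w v); ring. Qed.

End Dot.

Section Trajectory.
Variables (R : realFieldType) (d : nat) (eta : R) (x : 'cV[R]_d).
Implicit Types (u v : 'cV[R]_d) (s : seq 'cV[R]_d).

Fixpoint traj s : 'cV[R]_d :=
  if s is v :: s' then traj s' - (eta * dot v (traj s')) *: v else x.

Fixpoint coefs s : seq R :=
  if s is v :: s' then dot v (traj s') :: coefs s' else [::].

Local Notation unit_vectors s := (all [pred v | dot v v <= 1] s).
Local Notation S s := (\sum_(b <- coefs s) b ^+ 2).
Local Notation T s := (\sum_(b <- coefs s) `|b|).

Lemma size_coefs s : size (coefs s) = size s.
Proof. by elim: s => //= v s ->. Qed.

Lemma big_reflector_mulmx s :
  (\big[mulmx/1%:M]_(v <- s) (1%:M - eta *: (v *m v^T))) *m x = traj s.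
Proof.
elim: s => [|v s IH]; first by rewrite big_nil mul1mx.
by rewrite big_cons -mulmxA IH reflector_mulmx.
Qed.

Lemma traj_energy s : 0 <= eta -> unit_vectors s ->
  (2 * eta - eta ^+ 2) * S s <= dot x x - dot (traj s) (traj s) <= 2 * eta * S s.
Proof.
move=> eta_ge0; elim: s => [|v s IH] /=; first by rewrite big_nil !mulr0 subrr lexx.
case/andP=> /= vv /IH /andP[lo hi]; rewrite big_cons dot_reflector.
set b := dot v (traj s).
have vv' : 0 <= 1 - dot v v by rewrite subr_ge0.
have h1 := mulr_ge0 (mulr_ge0 (sqr_ge0 eta) (dot_ge0 v)) (sqr_ge0 b).
have h2 := mulr_ge0 (mulr_ge0 (sqr_ge0 eta) vv') (sqr_ge0 b).
apply/andP; split; nra.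
Qed.

Lemma dot_traj_err v s : 0 <= eta -> dot v v <= 1 -> unit_vectors s ->
  `|dot v x - dot v (traj s)| <= eta * T s.
Proof.
move=> eta_ge0 vv; elim: s => [|u s IH] /=; first by rewrite big_nil subrr normr0 mulr0.
case/andP=> /= uu /IH {}IH; rewrite big_cons dotBZr mulrDr.
set b := dot u (traj s).
have -> : dot v x - (dot v (traj s) - eta * b * dot v u) =
  (dot v x - dot v (traj s)) + eta * b * dot v u by ring.
apply: le_trans (ler_normD _ _) _; rewrite addrC lerD // !normrM ger0_norm //.
by rewrite -[leRHS]mulr1 ler_wpM2l ?mulr_ge0 // norm_dot_le1.
Qed.

Lemma sum_dot_sqr_bounds s : 0 <= eta -> unit_vectors s ->
  S s - eta * (T s ^+ 2 - S s) <= \sum_(v <- s) dot v x ^+ 2 <=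
  S s + eta * (T s ^+ 2 - S s) + eta ^+ 2 * (size s)%:R * T s ^+ 2.
Proof.
move=> eta_ge0; elim: s => [|v s IH] /=; first by rewrite !big_nil => _; lra.
case/andP=> /= vv /[dup] hs /IH /andP[lo hi]; rewrite !big_cons -natr1.
have /sqr_perturb/andP[alo ahi] := dot_traj_err eta_ge0 vv hs.
set a := dot v x in alo ahi *; set b := dot v (traj s) in alo ahi *.
have b0 := normr_ge0 b; have T0 : 0 <= T s by rewrite big_seq sumr_ge0.
(* (|b| + T)^2 - T^2 = |b| (|b| + 2 T) pays for the growth of the last term. *)
have key : 0 <= eta ^+ 2 * (size s).+1%:R * (`|b| * (`|b| + 2 * T s)).
  by rewrite !mulr_ge0 ?addr_ge0 ?mulr_ge0 ?sqr_ge0 ?ler0n.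
rewrite -[b ^+ 2]real_normK ?num_real // in alo ahi *.
apply/andP; split; nra.
Qed.

Lemma traj_energy_loss s : 0 < eta -> eta * (size s)%:R < 1 / 3 -> unit_vectors s ->
  2 * eta * (1 - slack eta (size s)%:R) * \sum_(v <- s) dot v x ^+ 2
  <= dot x x - dot (traj s) (traj s)
  <= 2 * eta * (1 + slack eta (size s)%:R) * \sum_(v <- s) dot v x ^+ 2.
Proof.
move=> eta_gt0 small hs.
have nn : 0 <= (size s)%:R * ((size s)%:R - 1) :> R.
  by case: (size s) => [|k]; rewrite ?mul0r // mulr_ge0 // subr_ge0 ler1n.
apply: slack_bounds (ler0n R _) nn small _ _ (traj_energy (ltW eta_gt0) hs)
  (sum_dot_sqr_bounds (ltW eta_gt0) hs) => //.
- by rewrite big_seq sumr_ge0 // => b _; rewrite sqr_ge0.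
- by rewrite -(size_coefs s) sqr_sum_norm_le.
Qed.

End Trajectory.

Section QuadraticForm.
Variables (R : realFieldType) (d : nat).
Implicit Types (M N : 'M[R]_d) (x : 'cV[R]_d).

Definition quad M x : R := (x^T *m M *m x) 0 0.

Lemma quadB M N x : quad (M - N) x = quad M x - quad N x.
Proof. by rewrite /quad mulmxBr mulmxBl !mxE. Qed.

Lemma quadZ k M x : quad (k *: M) x = k * quad M x.
Proof. by rewrite /quad -scalemxAr -scalemxAl !mxE. Qed.

Lemma quad1 x : quad 1%:M x = dot x x.
Proof. by rewrite /quad mulmx1 dot_mx. Qed.

Lemma quad_gram M x : quad (M^T *m M) x = dot (M *m x) (M *m x).
Proof. by rewrite /quad -dot_mx trmx_mul !mulmxA. Qed.

Lemma quad_Ssum B (phi : 'I_B -> 'cV[R]_d) x :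
  quad (Ssum phi) x = \sum_i dot (phi i) x ^+ 2.
Proof.
rewrite /quad /Ssum mulmx_sumr mulmx_suml summxE; apply: eq_bigr => i _.
by rewrite !mulmxA -(mulmxA _ _ x) [LHS]mxE big_ord1 !dot_mx dotC expr2.
Qed.

Lemma loewner_leP M N : loewner_le M N <-> forall x, quad M x <= quad N x.
Proof.
split=> le x; first by rewrite -subr_ge0 -quadB; apply: le.
by rewrite -[_ 0 0]/(quad _ x) quadB subr_ge0.
Qed.

End QuadraticForm.

Theorem mainTheorem4 (R : realFieldType) (d B : nat) (phi : 'I_B -> 'cV[R]_d)
  (eta : R) (hphi : forall i, sqnorm (phi i) <= 1)
  (heta : 0 < eta) (hetaB : eta * B%:R < 1 / 3) :
  let H := Hprod eta phi in
  let c := eta * B%:R / (1 - 2 * eta * B%:R) in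
  loewner_le (1%:M - (2 * eta * (1 + c)) *: Ssum phi) ((H^T) *m H) /\
  loewner_le ((H^T) *m H) (1%:M - (2 * eta * (1 - c)) *: Ssum phi).
Proof.
move=> H c; rewrite -[c]/(slack eta B%:R).
set s := [seq phi i | i <- index_enum 'I_B].
have size_s : size s = B by rewrite size_map [index_enum _]unlock -enumT size_enum_ord.
have unit_s : all [pred v | dot v v <= 1] s.
  by apply/allP => _ /mapP[i _ ->]; rewrite /= -sqnorm_dot.
have Hx x : H *m x = traj eta x s.
  rewrite /H /Hprod -(big_map phi xpredT (fun v => 1%:M - eta *: (v *m v^T))).
  exact: big_reflector_mulmx.
have Sx x : \sum_i dot (phi i) x ^+ 2 = \sum_(v <- s) dot v x ^+ 2 by rewrite big_map.
have energy x := @traj_energy_loss R d eta x s heta.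
rewrite size_s in energy.
split; apply/loewner_leP => x; rewrite quadB quadZ quad1 quad_gram quad_Ssum Hx Sx;
  have /andP[lo hi] := energy x hetaB unit_s; lra.
Qed.
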